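(* Let $m\ge1$, $y\in\mathbb{R}^{2m+1}_+$ and $\mathbf{Y}\in\boldsymbol{\mathcal{Y}}$. Then the problem of minimizing $\mathcal{I}(\mathbf{Y}\|\mathbf{W})$ over $\mathbf{W}\in\boldsymbol{\mathcal{W}}$ has the explicit minimizer $\mathbf{W}^\star=\mathbf{W}^\star(\mathbf{Y})$, namely the element of $\boldsymbol{\mathcal{W}}$ associated with the vector $x^\star\in\mathbb{R}^{m+1}_+$ given by $$x^\star_j=\frac{\widehat{\mathbf{Y}}_j}{2\sqrt{\sum_{i=0}^{2m}y_i}},\qquad \widehat{\mathbf{Y}}_j=\sum_{i=0}^m\mathbf{Y}_{i+j,i}+\sum_{i=j}^{j+m}\mathbf{Y}_{ij},\qquad j=0,\dots,m.$$ Moreover, for every $\mathbf{W}\in\boldsymbol{\mathcal{W}}$ the Pythagorean identity $$\mathcal{I}(\mathbf{Y}\|\mathbf{W})=\mathcal{I}(\mathbf{Y}\|\mathbf{W}^\star)+\mathcal{I}(\mathbf{W}^\star\|\mathbf{W})$$ holds.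
   Context: Matrices are indexed by rows $i=0,\dots,2m$ and columns $j=0,\dots,m$. $\boldsymbol{\mathcal{Y}}$ is the set of $\mathbf{Y}\in\mathbb{R}^{(2m+1)\times(m+1)}_+$ with $\mathbf{Y}_{ij}=0$ for $i<j$ and for $i>j+m$, and with row sums $\sum_j\mathbf{Y}_{ij}=y_i$ for all $i$. $\boldsymbol{\mathcal{W}}$ is the set of matrices $\mathbf{W}\in\mathbb{R}^{(2m+1)\times(m+1)}_+$ of the form $\mathbf{W}_{ij}=x_{i-j}x_j$ for $0\le j\le m$, $j\le i\le j+m$, and $\mathbf{W}_{ij}=0$ otherwise, for some $x\in\mathbb{R}^{m+1}_+$ (the element of $\boldsymbol{\mathcal{W}}$ ''associated with'' $x$). For nonnegative arrays $M,N$ of the same size, $\mathcal{I}(M\|N)=\sum_{i,j}\big(M_{ij}\log\frac{M_{ij}}{N_{ij}}-M_{ij}+N_{ij}\big)$ (convention $0\log0=0$; $+\infty$ if some $M_{ij}>0=N_{ij}$). *)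

From HB Require Import structures.
From mathcomp Require Import all_boot all_order all_algebra.
From mathcomp Require Import all_classical all_reals.
From mathcomp Require Import exp.
Set Implicit Arguments. Unset Strict Implicit. Unset Printing Implicit Defensive.
Import Order.TTheory GRing.Theory Num.Theory.
Local Open Scope ring_scope.

Section Defs.
Variable R : realType.

Definition idiv (p q : nat) (M N : 'M[R]_(p, q)) : \bar R :=
  if [exists i, exists j, (0 < M i j) && (N i j == 0)] then +oo%E
  else (\sum_(i < p) \sum_(j < q)
          (if M i j == 0 then N i j
           else M i j * ln (M i j / N i j) - M i j + N i j))%:E.

Definition in_Yset (m : nat) (y : 'I_((2 * m).+1) -> R)
  (Y : 'M[R]_((2 * m).+1, m.+1)) : Prop :=
  (forall i j, 0 <= Y i j) /\
  (forall (i : 'I_((2 * m).+1)) (j : 'I_(m.+1)),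
      ((i < j)%N \/ (j + m < i)%N) -> Y i j = 0) /\
  (forall i, \sum_(j < m.+1) Y i j = y i).

Definition Wof (m : nat) (x : 'I_(m.+1) -> R) : 'M[R]_((2 * m).+1, m.+1) :=
  \matrix_(i < (2 * m).+1, j < m.+1)
    if ((j <= i) && (i <= j + m))%N then x (inord (i - j)) * x j else 0.

Definition in_Wset (m : nat) (W : 'M[R]_((2 * m).+1, m.+1)) : Prop :=
  exists x : 'I_(m.+1) -> R, (forall j, 0 <= x j) /\ W = Wof x.

Definition Yhat (m : nat) (Y : 'M[R]_((2 * m).+1, m.+1)) (j : 'I_(m.+1)) : R :=
  \sum_(0 <= i < m.+1) Y (inord (i + j)) (inord i)
  + \sum_(j <= i < j + m.+1) Y (inord i) j.

Definition xstar (m : nat) (y : 'I_((2 * m).+1) -> R)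
  (Y : 'M[R]_((2 * m).+1, m.+1)) (j : 'I_(m.+1)) : R :=
  Yhat Y j / (2 * Num.sqrt (\sum_(i < (2 * m).+1) y i)).

End Defs.

(* For W = Wof x the log-ratio ln (W*_ij / W_ij) splits as l_(i-j) + l_j with
   l_k = ln (x*_k / x_k), so the Pythagorean defect
   sum_ij (W*_ij - Y_ij) ln (W*_ij / W_ij) equals sum_k (Yhat W*_k - Yhat Y_k) l_k.
   It vanishes because Yhat (Wof x)_k = 2 x_k sum_l x_l, and x* solves
   Yhat (Wof x) = Yhat Y.  Minimality then follows from the
   nonnegativity of the I-divergence.  The infinite cases match up because
   Y << Wof x forces x_k > 0 wherever Yhat Y_k > 0, hence W* << Wof x. *)

From HB Require Import structures.
From mathcomp Require Import all_boot all_order all_algebra.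
From mathcomp Require Import all_classical all_reals.
From mathcomp Require Import exp.
From mathcomp Require Import ring lra zify.
Import Order.TTheory GRing.Theory Num.Theory.
Local Open Scope ring_scope.
Set Implicit Arguments. Unset Strict Implicit. Unset Printing Implicit Defensive.

Section IDivergence.
Variable R : realType.

Definition idiv_term (a b : R) : R :=
  if a == 0 then b else a * ln (a / b) - a + b.

Lemma ln_div_pos (a b : R) : 0 < a -> 0 < b -> ln (a / b) = ln a - ln b.
Proof. by move=> a_gt0 b_gt0; rewrite ln_div ?posrE. Qed.

Lemma idiv_term_ge0 (a b : R) :
  0 <= a -> 0 <= b -> (0 < a -> 0 < b) -> 0 <= idiv_term a b.
Proof.
rewrite /idiv_term le_eqVlt eq_sym => /orP[/eqP->|a_gt0] b_ge0 ab; rewrite ?eqxx //.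
have b_gt0 := ab a_gt0; rewrite gt_eqF //.
have : ln (1 + (b / a - 1)) <= b / a - 1.
  by apply: le_ln1Dx; have := divr_gt0 b_gt0 a_gt0; lra.
rewrite addrC subrK !ln_div_pos // => ln_le.
have -> : a * (ln a - ln b) - a + b = a * ((b / a - 1) - (ln b - ln a)).
  by field; rewrite gt_eqF.
by apply: mulr_ge0; [exact: ltW | rewrite subr_ge0].
Qed.

Lemma idiv_term_split (a b c : R) :
  0 <= a -> 0 <= b -> (0 < a -> 0 < b) -> (0 < b -> 0 < c) ->
  idiv_term a c + (b - a) * ln (b / c) = idiv_term a b + idiv_term b c.
Proof.
rewrite /idiv_term le_eqVlt eq_sym => /orP[/eqP->|a_gt0].
  rewrite eqxx subr0 le_eqVlt eq_sym => /orP[/eqP->|b_gt0] _ bc.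
    by rewrite eqxx mul0r addr0 add0r.
  by rewrite gt_eqF //; ring.
move=> _ ab bc; have b_gt0 := ab a_gt0; have c_gt0 := bc b_gt0.
rewrite !gt_eqF // !ln_div_pos //; ring.
Qed.

Variables p q : nat.
Implicit Types M N P : 'M[R]_(p, q).

Definition abscont M N := [forall i, forall j, (0 < M i j) ==> (0 < N i j)].

Lemma abscontP M N :
  reflect (forall i j, 0 < M i j -> 0 < N i j) (abscont M N).
Proof.
apply: (iffP forallP) => [h i j|h i]; first exact/implyP/(forallP (h i)).
by apply/forallP => j; apply/implyP/h.
Qed.

Lemma abscont_trans N M P : abscont M N -> abscont N P -> abscont M P.
Proof. by move=> /abscontP MN /abscontP NP; apply/abscontP => i j /MN/NP. Qed.

Lemma idivE M N : (forall i j, 0 <= N i j) ->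
  idiv M N = if abscont M N
             then (\sum_i \sum_j idiv_term (M i j) (N i j))%:E else +oo%E.
Proof.
move=> N_ge0; rewrite /idiv.
have -> : [exists i, exists j, (0 < M i j) && (N i j == 0)] = ~~ abscont M N.
  rewrite negb_forall; apply: eq_existsb => i; rewrite negb_forall.
  by apply: eq_existsb => j; rewrite negb_imply [0 < N i j]lt0r N_ge0 andbT negbK.
by rewrite if_neg.
Qed.

Lemma idiv_ge0 M N : (forall i j, 0 <= M i j) -> (forall i j, 0 <= N i j) ->
  (0 <= idiv M N)%E.
Proof.
move=> M_ge0 N_ge0; rewrite idivE //; case: abscontP => [MN|_]; last exact: leey.
rewrite lee_fin; do 2![apply: sumr_ge0 => ? _].
by apply: idiv_term_ge0 => //; apply: MN.
Qed.

Lemma idiv_pythagoras M N P :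
  (forall i j, 0 <= M i j) -> (forall i j, 0 <= N i j) -> (forall i j, 0 <= P i j) ->
  abscont M N -> (abscont M P -> abscont N P) ->
  (abscont N P -> \sum_i \sum_j (N i j - M i j) * ln (N i j / P i j) = 0) ->
  idiv M P = (idiv M N + idiv N P)%E.
Proof.
move=> M_ge0 N_ge0 P_ge0 MN MP_NP cross0; rewrite !idivE // MN.
have [NP|nNP] := boolP (abscont N P); last first.
  by rewrite ifN ?addey //; apply: contra nNP.
rewrite (abscont_trans MN NP) -EFinD; congr _%:E.
rewrite -[LHS]addr0 -[X in _ + X](cross0 NP) -!big_split /=.
apply: eq_bigr => i _; rewrite -!big_split /=; apply: eq_bigr => j _.
by apply: idiv_term_split => //; [exact/(abscontP _ _ MN) | exact/(abscontP _ _ NP)].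
Qed.
End IDivergence.

Section Band.
Variables (R : realType) (m : nat).
Implicit Types (M : 'M[R]_((2 * m).+1, m.+1)) (x f : 'I_m.+1 -> R).

Definition in_band (i : 'I_(2 * m).+1) (j : 'I_m.+1) := (j <= i <= j + m)%N.

Definition banded M := forall i j, ~~ in_band i j -> M i j = 0.

Lemma inord_band_sub i j :
  in_band i j -> ((inord (i - j) : 'I_m.+1) : nat) = (i - j)%N.
Proof. by rewrite /in_band => /andP[? ?]; rewrite inordK //; lia. Qed.

Lemma in_band_shift (j k : 'I_m.+1) : in_band (inord (j + k)) j.
Proof. by rewrite /in_band inordK; have := ltn_ord k; have := ltn_ord j; lia. Qed.

Lemma inord_band_shift (j k : 'I_m.+1) :
  inord ((inord (j + k) : 'I_(2 * m).+1) - j) = k.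
Proof.
apply: val_inj; rewrite /= inord_band_sub ?in_band_shift // inordK ?addKn //.
by have := ltn_ord k; have := ltn_ord j; lia.
Qed.

Lemma WofE x i j :
  Wof x i j = if in_band i j then x (inord (i - j)) * x j else 0.
Proof. by rewrite mxE. Qed.

Lemma Wof_banded x : banded (Wof x).
Proof. by move=> i j /negbTE out; rewrite WofE out. Qed.

Lemma Wof_gt0 x : (forall k, 0 <= x k) -> forall i j,
  (0 < Wof x i j) = [&& in_band i j, 0 < x (inord (i - j)) & 0 < x j].
Proof.
move=> x_ge0 i j; rewrite WofE; case: in_band; last by rewrite ltxx.
by rewrite !lt0r mulf_eq0 negb_or !x_ge0 mulr_ge0 // !andbT.
Qed.

Lemma Wof_ge0 x : (forall k, 0 <= x k) -> forall i j, 0 <= Wof x i j.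
Proof. by move=> x_ge0 i j; rewrite WofE; case: ifP => // _; rewrite mulr_ge0. Qed.

Lemma sum_band_column (j : 'I_m.+1) (F : 'I_(2 * m).+1 -> R) :
  (forall i, ~~ in_band i j -> F i = 0) ->
  \sum_i F i = \sum_(k < m.+1) F (inord (j + k)).
Proof.
move=> F_out; have j_lt := ltn_ord j.
rewrite -(big_mkord xpredT (fun k => F (inord (j + k)))).
rewrite (eq_bigr (F \o inord \o val)) => [|i _]; last by rewrite /= inord_val.
rewrite -(big_mkord xpredT (F \o inord)) (big_cat_nat (n := j)) //=; last lia.
rewrite (big_cat_nat (m := j) (n := (j + m.+1)%N)) /=; [|lia|lia].
have out_band n : (n < j)%N || (j + m < n < (2 * m).+1)%N -> F (inord n) = 0.
  by move=> n_out; apply: F_out; rewrite /in_band inordK; lia.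
rewrite [X in X + _]big1_seq ?add0r => [|n]; last first.
  by rewrite mem_index_iota => ?; apply: out_band; lia.
rewrite [X in _ + X]big1_seq ?addr0 => [|n]; last first.
  by rewrite mem_index_iota => ?; apply: out_band; lia.
by rewrite -{1}(add0n j) big_addn addKn; apply: eq_bigr => k _; rewrite addnC.
Qed.

Lemma Yhat_banded M k : banded M ->
  Yhat M k = \sum_(j < m.+1) M (inord (j + k)) j + \sum_i M i k.
Proof.
move=> M_band; rewrite /Yhat big_mkord; congr (_ + _).
  by apply: eq_bigr => j _; rewrite inord_val.
rewrite (@sum_band_column k (M^~ k)) => [|i]; last exact: M_band.
by rewrite -{1}(add0n k) big_addn addKn big_mkord; apply: eq_bigr => l _; rewrite addnC.
Qed.

Lemma sum_band_Yhat M f : banded M ->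
  \sum_i \sum_j M i j * (f (inord (i - j)) + f j) = \sum_k Yhat M k * f k.
Proof.
move=> M_band.
under eq_bigr do under eq_bigr do rewrite mulrDr.
under eq_bigr do rewrite big_split /=.
under [RHS]eq_bigr do rewrite Yhat_banded // mulrDl !mulr_suml.
rewrite !big_split /= [in LHS]exchange_big [X in _ + X]exchange_big /=.
rewrite [in RHS]exchange_big /=; congr (_ + _); apply: eq_bigr => j _.
rewrite (@sum_band_column j (fun i => M i j * f (inord (i - j)))) => [|i out].
  by apply: eq_bigr => k _; rewrite inord_band_shift.
by rewrite M_band ?mul0r.
Qed.

Lemma Yhat_Wof x k : Yhat (Wof x) k = 2 * x k * \sum_j x j.
Proof.
rewrite Yhat_banded; last exact: Wof_banded.
rewrite [X in _ + X](@sum_band_column k) => [|i]; last exact: Wof_banded.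
rewrite -big_split /= mulr_sumr; apply: eq_bigr => j _.
by rewrite !WofE !in_band_shift !inord_band_shift; ring.
Qed.

Section NonnegBanded.
Variable M : 'M[R]_((2 * m).+1, m.+1).
Hypotheses (M_ge0 : forall i j, 0 <= M i j) (M_band : banded M).

Lemma Yhat_ge0 k : 0 <= Yhat M k.
Proof. by rewrite /Yhat addr_ge0 // sumr_ge0. Qed.

Lemma entry_le_Yhat i j :
  M i j <= Yhat M j /\ M i j <= Yhat M (inord (i - j)).
Proof.
have [ij|/M_band->] := boolP (in_band i j); last by rewrite !Yhat_ge0.
have term_le (I : finType) (F : I -> R) a :
    (forall b, 0 <= F b) -> F a <= \sum_b F b.
  by move=> F_ge0; rewrite (bigD1 a) //= lerDl sumr_ge0.
rewrite !Yhat_banded //; split.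
  by rewrite (le_trans (term_le _ (M^~ j) i _)) // lerDr sumr_ge0.
set k : 'I_m.+1 := inord (i - j).
have -> : M i j = M (inord (j + k)) j.
  congr (M _ j); apply: val_inj => /=.
  have i_lt := ltn_ord i; move: (ij) => /andP[? ?].
  by rewrite inordK /k inord_band_sub //; lia.
rewrite (le_trans (term_le _ (fun l : 'I_m.+1 => M (inord (l + k)) l) j _)) //.
by rewrite lerDl sumr_ge0.
Qed.

Lemma Yhat_gt0_abscont x k : (forall l, 0 <= x l) ->
  abscont M (Wof x) -> 0 < Yhat M k -> 0 < x k.
Proof.
move=> x_ge0 /abscontP MW; apply: contraTT; rewrite -!leNgt => xk_le0.
have xk0 : x k = 0 by apply/le_anti; rewrite xk_le0 x_ge0.
have M0 i j : in_band i j -> (inord (i - j) == k) || (j == k) -> M i j = 0.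
  move=> ij ijk; apply/le_anti; rewrite M_ge0 andbT leNgt; apply/negP => /MW.
  by rewrite Wof_gt0 // ij /=; case/orP: ijk => /eqP->; rewrite xk0 ltxx ?andbF.
rewrite Yhat_banded // big1 => [|j _]; last first.
  by apply: M0; rewrite ?in_band_shift // inord_band_shift eqxx.
rewrite big1 ?addr0 // => i _; have [ij|/M_band//] := boolP (in_band i k).
by apply: M0; rewrite // eqxx orbT.
Qed.
End NonnegBanded.
End Band.

Section Minimizer.
Variables (R : realType) (m : nat) (y : 'I_(2 * m).+1 -> R).
Variable Y : 'M[R]_((2 * m).+1, m.+1).
Hypothesis Y_in : in_Yset y Y.

Local Notation S := (\sum_i y i).
Local Notation xs := (xstar y Y).
Local Notation Wstar := (Wof xs).

Lemma Yset_ge0 i j : 0 <= Y i j.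
Proof. by case: Y_in. Qed.

Lemma Yset_banded : banded Y.
Proof.
case: Y_in => _ [Y_out _] i j; rewrite /in_band negb_and -!ltnNge => ij.
by apply: Y_out; case/orP: ij; [left|right].
Qed.

Lemma sum_Yhat : \sum_k Yhat Y k = 2 * S.
Proof.
case: Y_in => _ [_ Y_rows].
under eq_bigr do rewrite -[Yhat Y _]mulr1.
rewrite -(sum_band_Yhat (fun _ => 1)); last exact: Yset_banded.
rewrite mulr_sumr; apply: eq_bigr => i _; rewrite -Y_rows mulr_sumr.
by apply: eq_bigr => j _; rewrite mulrC.
Qed.

Lemma xstar_ge0 k : 0 <= xs k.
Proof.
by rewrite /xstar divr_ge0 ?mulr_ge0 ?sqrtr_ge0 ?Yhat_ge0 //; apply: Yset_ge0.
Qed.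

Lemma Yhat_le_sum k : Yhat Y k <= 2 * S.
Proof.
rewrite -sum_Yhat (bigD1 k) //= lerDl sumr_ge0 // => l _.
by apply: Yhat_ge0; apply: Yset_ge0.
Qed.

Lemma xstar_gt0 k : (0 < xs k) = (0 < Yhat Y k).
Proof.
apply/idP/idP => [|Yk_gt0].
  apply: contraTT; rewrite -!leNgt => Yk_le0.
  by rewrite /xstar mulr_le0_ge0 // invr_ge0 mulr_ge0 ?sqrtr_ge0.
have S_gt0 : 0 < S by have := Yhat_le_sum k; lra.
by rewrite /xstar divr_gt0 // mulr_gt0 // sqrtr_gt0.
Qed.

Lemma Yhat_Wstar k : Yhat Wstar k = Yhat Y k.
Proof.
have Yk_ge0 : 0 <= Yhat Y k by apply: Yhat_ge0; apply: Yset_ge0.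
have [S_le0|S_gt0] := lerP S 0.
  (* Here [xs] is the junk value [Yhat Y k / 0 = 0], but [Yhat Y k = 0] as well. *)
  have Yk0 : Yhat Y k = 0.
    by apply/le_anti; rewrite Yk_ge0 andbT (le_trans (Yhat_le_sum k)) //; lra.
  by rewrite Yhat_Wof /xstar Yk0 !mul0r mulr0 mul0r.
rewrite Yhat_Wof /xstar -mulr_suml sum_Yhat.
set r := Num.sqrt S; have r_gt0 : 0 < r by rewrite sqrtr_gt0.
rewrite -[in X in _ * (X / _)](sqr_sqrtr (ltW S_gt0)) -/r.
by field; rewrite gt_eqF.
Qed.

Lemma abscont_Y_Wstar : abscont Y Wstar.
Proof.
apply/abscontP => i j Yij_gt0; rewrite Wof_gt0; last exact: xstar_ge0.
have [ij|/Yset_banded Y0] := boolP (in_band i j); last by rewrite Y0 ltxx in Yij_gt0.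
have [le_j le_ij] := entry_le_Yhat Yset_ge0 Yset_banded i j.
by rewrite !xstar_gt0 (lt_le_trans Yij_gt0 le_j) (lt_le_trans Yij_gt0 le_ij).
Qed.

Lemma abscont_Wstar x : (forall k, 0 <= x k) ->
  abscont Y (Wof x) -> abscont Wstar (Wof x).
Proof.
move=> x_ge0 YW; apply/abscontP => i j; rewrite !Wof_gt0 //; last exact: xstar_ge0.
case/and3P=> -> a_gt0 j_gt0.
by rewrite !(Yhat_gt0_abscont Yset_ge0 Yset_banded x_ge0 YW) -?xstar_gt0.
Qed.

Lemma cross_term_eq0 x : (forall k, 0 <= x k) -> abscont Wstar (Wof x) ->
  \sum_i \sum_j (Wstar i j - Y i j) * ln (Wstar i j / Wof x i j) = 0.
Proof.
move=> x_ge0 /abscontP WsW; pose l k := ln (xs k / x k).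
transitivity (\sum_i \sum_j (Wstar i j - Y i j) * (l (inord (i - j)) + l j)).
  apply: eq_bigr => i _; apply: eq_bigr => j _.
  have [Ws_gt0|] := boolP (0 < Wstar i j); last first.
    rewrite lt_neqAle Wof_ge0 ?andbT ?negbK => [/eqP Ws0|]; last exact: xstar_ge0.
    have Y0 : Y i j = 0.
      apply/le_anti; rewrite Yset_ge0 andbT leNgt; apply/negP.
      by move/(abscontP _ _ abscont_Y_Wstar); rewrite -Ws0 ltxx.
    by rewrite -Ws0 Y0 subrr !mul0r.
  have := WsW _ _ Ws_gt0; rewrite !Wof_gt0 // in Ws_gt0 *; last exact: xstar_ge0.
  case/and3P: Ws_gt0 => ij ? ? /and3P[_ ? ?].
  by rewrite !WofE ij -mulf_div lnM // posrE divr_gt0.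
under eq_bigr do under eq_bigr do rewrite mulrBl.
under eq_bigr do rewrite sumrB.
have Ws_band := Wof_banded xs; have Y_band := Yset_banded.
rewrite sumrB !sum_band_Yhat //.
by under eq_bigr do rewrite Yhat_Wstar; rewrite subrr.
Qed.
End Minimizer.

Theorem lemma2 (R : realType) (m : nat) (hm : (1 <= m)%N)
  (y : 'I_((2 * m).+1) -> R) (hy : forall i, 0 <= y i)
  (Y : 'M[R]_((2 * m).+1, m.+1)) (hY : in_Yset y Y) :
  let Wstar := Wof (xstar y Y) in
  [/\ (forall j, 0 <= xstar y Y j),
      in_Wset Wstar,
      (forall W, in_Wset W -> (idiv Y Wstar <= idiv Y W)%E) &
      (forall W, in_Wset W -> idiv Y W = (idiv Y Wstar + idiv Wstar W)%E)].
Proof.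
move=> Wstar; have xs_ge0 := xstar_ge0 hY.
have pythagoras W : in_Wset W -> idiv Y W = (idiv Y Wstar + idiv Wstar W)%E.
  case=> x [x_ge0 ->]; apply: idiv_pythagoras.
  - exact: Yset_ge0 hY.
  - exact: Wof_ge0.
  - exact: Wof_ge0.
  - exact: abscont_Y_Wstar.
  - exact: abscont_Wstar.
  - exact: cross_term_eq0.
split=> // [|W W_in]; first by exists (xstar y Y).
rewrite (pythagoras W W_in) leeDl // idiv_ge0 //; first exact: Wof_ge0.
by case: W_in => x [x_ge0 ->]; apply: Wof_ge0.
Qed.
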